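(* Let $K$ be a field, let $I_1\subseteq S_1=K[x_1,\ldots,x_m]$ and $I_2\subseteq S_2=K[y_1,\ldots,y_n]$ be monomial ideals, let $S=S_1\otimes_K S_2=K[x_1,\ldots,x_m,y_1,\ldots,y_n]$, and let $I=(I_1,I_2)S$. Assume that $I_1$, $I_2$ and $I$ all satisfy the Ratliff condition. Regard $\mathrm{Soc}(I_1)$, $\mathrm{Soc}(I_2)$ and $\mathrm{Soc}(I)$ as ideals of $\mathrm{gr}_{I_1}(S_1)$, $\mathrm{gr}_{I_2}(S_2)$ and $\mathrm{gr}_I(S)$ respectively, and extend $\mathrm{Soc}(I_1)$, $\mathrm{Soc}(I_2)$ to ideals of $\mathrm{gr}_I(S)$ via the canonical injective maps $\mathrm{gr}_{I_i}(S_i)\to\mathrm{gr}_I(S)$. Then $\mathrm{Soc}(I)=\mathrm{Soc}(I_1)\,\mathrm{Soc}(I_2)$ (product of ideals in $\mathrm{gr}_I(S)$); equivalently, under the canonical isomorphism $\alpha:\mathrm{gr}_{I_1}(S_1)\otimes_K\mathrm{gr}_{I_2}(S_2)\to\mathrm{gr}_I(S)$, $f\otimes g\mapsto fg$, one has $\alpha(\mathrm{Soc}(I_1)\otimes_K\mathrm{Soc}(I_2))=\mathrm{Soc}(I)$.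
   Context: For an ideal $J$ in a ring $R$ (with maximal graded ideal $\mathfrak{n}$), $\mathrm{gr}_J(R)=\bigoplus_{k\ge0}J^k/J^{k+1}$ and $\mathrm{Soc}(J)=\bigoplus_{k\ge0}(J^k:\mathfrak{n})/J^k$. $J$ satisfies the Ratliff condition if $(J^{k+1}:J)=J^k$ for all $k\ge0$. Under this condition $(J^{k+1}:\mathfrak{n})\subseteq J^k$, so $(J^{k+1}:\mathfrak{n})/J^{k+1}\subseteq J^k/J^{k+1}$, and $\mathrm{Soc}(J)$ is identified with the ideal $(0:_{\mathrm{gr}_J(R)}\mathfrak{n})$ of $\mathrm{gr}_J(R)$, whose elements of degree $k$ are the classes $u+J^{k+1}\in J^k/J^{k+1}$ with $u\in (J^{k+1}:\mathfrak{n})$. Here $\mathfrak{n}$ is the maximal graded ideal of $S_1$, $S_2$ or $S$ respectively. The map $\alpha$ is an isomorphism. *)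

From HB Require Import structures.
From mathcomp Require Import all_boot all_order all_algebra.
From mathcomp Require Import mpoly.
Set Implicit Arguments. Unset Strict Implicit. Unset Printing Implicit Defensive.
Import GRing.Theory.
Local Open Scope ring_scope.

Section Ideals.
Variable R : comRingType.

Definition ideal_gen (G : R -> Prop) : R -> Prop :=
  fun p => exists s : seq (R * R),
    (forall x, x \in s -> G x.2) /\ p = \sum_(x <- s) x.1 * x.2.

Definition ideal_mul (I J : R -> Prop) : R -> Prop :=
  ideal_gen (fun p => exists a b, I a /\ J b /\ p = a * b).

Fixpoint ideal_pow (I : R -> Prop) (k : nat) : R -> Prop :=
  match k with
  | 0 => ideal_gen (fun p => p = 1)
  | k.+1 => ideal_mul (ideal_pow I k) I
  end.

Definition colon (I J : R -> Prop) : R -> Prop :=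
  fun u => forall v, J v -> I (u * v).

Definition ratliff (J : R -> Prop) : Prop :=
  forall (k : nat) (u : R), colon (ideal_pow J k.+1) J u <-> ideal_pow J k u.

(* Degree-k homogeneous part of Soc(J) in gr_J(R), nn the maximal graded
   ideal: the classes u + J^{k+1} in J^k/J^{k+1} with u in (J^{k+1} : nn).
   soc_lift J nn k u  means: u is a representative of such a class. *)
Definition soc_lift (J nn : R -> Prop) (k : nat) (u : R) : Prop :=
  ideal_pow J k u /\ colon (ideal_pow J k.+1) nn u.

End Ideals.

Section Graded.
Variables (R1 R : comRingType).

(* Extension to gr_J(R) of a homogeneous ideal A of gr_{J1}(R1) along the
   canonical map gr_{J1}(R1) -> gr_J(R) induced by f (class of a in
   J1^i/J1^{i+1} |-> class of f a in J^i/J^{i+1}).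
   A i a : a represents a degree-i element of A.
   ext_comp f A J d x : x in J^d represents a degree-d element of the
   extended ideal, i.e. x = sum_l r_l f(a_l) mod J^{d+1} with r_l in J^{d-i_l}
   (degree d-i_l elements of gr_J(R)) and A i_l a_l. *)
Definition ext_comp (f : R1 -> R) (A : nat -> R1 -> Prop) (J : R -> Prop)
    (d : nat) (x : R) : Prop :=
  ideal_pow J d x /\
  exists s : seq (nat * R * R1),
    (forall t, t \in s -> (t.1.1 <= d)%N /\ ideal_pow J (d - t.1.1) t.1.2
                          /\ A t.1.1 t.2) /\
    ideal_pow J d.+1 (x - \sum_(t <- s) t.1.2 * f t.2).

End Graded.

Section Product.
Variable R : comRingType.
(* Degree-k component of the product B*C of homogeneous ideals of gr_J(R):
   u in J^k with u = sum_l x_l y_l mod J^{k+1}, x_l of degree d_l in B and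
   y_l of degree k-d_l in C. *)
Definition prod_comp (B C : nat -> R -> Prop) (J : R -> Prop)
    (k : nat) (u : R) : Prop :=
  ideal_pow J k u /\
  exists s : seq (nat * R * R),
    (forall t, t \in s -> (t.1.1 <= k)%N /\ B t.1.1 t.1.2 /\ C (k - t.1.1)%N t.2) /\
    ideal_pow J k.+1 (u - \sum_(t <- s) t.1.2 * t.2).
End Product.

Section Poly.
Variable K : fieldType.

Definition maxgr (n : nat) : {mpoly K[n]} -> Prop :=
  ideal_gen (fun p => exists i : 'I_n, p = 'X_i).

Definition monomial_ideal (n : nat) (I : {mpoly K[n]} -> Prop) : Prop :=
  exists G : 'X_{1..n} -> Prop,
    forall p, I p <-> ideal_gen (fun q => exists mm, G mm /\ q = 'X_[mm]) p.

Definition incl1 (m n : nat) (p : {mpoly K[m]}) : {mpoly K[m + n]} :=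
  mmap (@mpolyC _ K) (fun i : 'I_m => 'X_(lshift n i)) p.
Definition incl2 (m n : nat) (p : {mpoly K[n]}) : {mpoly K[m + n]} :=
  mmap (@mpolyC _ K) (fun j : 'I_n => 'X_(rshift m j)) p.

Definition sum_ideal (m n : nat) (I1 : {mpoly K[m]} -> Prop)
    (I2 : {mpoly K[n]} -> Prop) : {mpoly K[m + n]} -> Prop :=
  ideal_gen (fun p => (exists a, I1 a /\ p = incl1 n a)
                      \/ (exists b, I2 b /\ p = incl2 m b)).
End Poly.

(* For monomial ideals everything is decided on exponent vectors: a
   polynomial lies in a monomial ideal iff each of its monomials does, and a
   monomial x^a y^b lies in (I1, I2)^k iff x^a lies in I1^i and y^b in I2^j for
   some i + j = k.  Take a socle monomial x^a y^b of degree k of I, i.e. one in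
   I^k but not in I^(k+1) that every variable moves into I^(k+1), and choose
   i + j = k as above.  Multiplying by x_l must raise the x-part to
   I1^(i+1): otherwise the y-part would reach I2^(j+1) and x^a y^b itself would
   lie in I^(k+1).  So x^a and y^b are socle monomials of I1 and I2 of degrees
   i and j.  Conversely, a product of socle representatives of I1 and I2 is
   moved into I^(k+1) by every variable, since each variable of S comes from
   one of the two factors. *)

From HB Require Import structures.
From mathcomp Require Import all_boot all_order all_algebra.
From mathcomp Require Import mpoly.
From mathcomp Require Import zify.
From Stdlib Require Import Classical.
Set Implicit Arguments. Unset Strict Implicit. Unset Printing Implicit Defensive.
Import GRing.Theory.
Local Open Scope ring_scope.

Section Ideals.
Variable R : comNzRingType.
Implicit Types (G Q J : R -> Prop) (x y : R).

Record is_ideal Q : Prop := IsIdeal {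
  ideal0 : Q 0;
  idealD : forall x y, Q x -> Q y -> Q (x + y);
  idealMl : forall r x, Q x -> Q (r * x)
}.

Lemma idealMr Q r x : is_ideal Q -> Q x -> Q (x * r).
Proof. by move=> HQ Qx; rewrite mulrC; apply: idealMl. Qed.

Lemma ideal_sum Q (I : eqType) (s : seq I) (F : I -> R) : is_ideal Q ->
  (forall i, i \in s -> Q (F i)) -> Q (\sum_(i <- s) F i).
Proof.
by move=> HQ Hs; rewrite big_seq; apply: big_ind => //; [apply: ideal0 | apply: idealD].
Qed.

Lemma ideal_gen_ideal G : is_ideal (ideal_gen G).
Proof.
split; first by exists [::]; rewrite big_nil.
- move=> _ _ [s1 [H1 ->]] [s2 [H2 ->]]; exists (s1 ++ s2).
  by split; [move=> t; rewrite mem_cat => /orP [/H1|/H2] | rewrite big_cat].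
- move=> r _ [s [Hs ->]]; exists [seq (r * t.1, t.2) | t <- s]; split.
    by move=> t /mapP [t' /Hs ? ->].
  by rewrite big_map mulr_sumr; apply: eq_bigr => t _; rewrite mulrA.
Qed.

Lemma ideal_gen_mem G x : G x -> ideal_gen G x.
Proof.
move=> Gx; exists [:: (1, x)]; rewrite big_seq1 mul1r.
by split=> // t; rewrite inE => /eqP ->.
Qed.

Lemma ideal_gen_min G Q : is_ideal Q -> (forall x, G x -> Q x) ->
  forall p, ideal_gen G p -> Q p.
Proof. by move=> HQ HG _ [s [Hs ->]]; apply: ideal_sum => // t /Hs/HG/idealMl; apply. Qed.

Lemma mul_preimage_ideal Q x : is_ideal Q -> is_ideal (fun y => Q (x * y)).
Proof.
move=> HQ; split; first by rewrite mulr0; apply: ideal0.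
- by move=> a b Qa Qb; rewrite mulrDr; apply: idealD.
- by move=> r a Qa; rewrite mulrCA; apply: idealMl.
Qed.

Lemma colon_ideal_gen Q G x : is_ideal Q -> (forall g, G g -> Q (x * g)) ->
  colon Q (ideal_gen G) x.
Proof. by move=> HQ HG; apply: ideal_gen_min => //; apply: mul_preimage_ideal. Qed.

Lemma ideal_pow_ideal J k : is_ideal (ideal_pow J k).
Proof. by case: k => [|k]; apply: ideal_gen_ideal. Qed.

Lemma ideal_pow0 J x : ideal_pow J 0 x.
Proof.
by rewrite -[x]mulr1; apply: idealMl; [apply: ideal_pow_ideal | apply: ideal_gen_mem].
Qed.

Lemma ideal_powD J a b x y : ideal_pow J a x -> ideal_pow J b y ->
  ideal_pow J (a + b) (x * y).
Proof.
move=> Hx; elim: b y => [|b IH] y Hy.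
  by rewrite addn0; apply: idealMr => //; apply: ideal_pow_ideal.
rewrite addnS; move: y Hy; apply: ideal_gen_min.
  by apply: mul_preimage_ideal; apply: ideal_pow_ideal.
move=> _ [a0 [b0 [Ha0 [Hb0 ->]]]]; rewrite mulrA; apply: ideal_gen_mem.
by exists (x * a0), b0; split => //; apply: IH.
Qed.

Lemma ideal_powS_sub J k x : ideal_pow J k.+1 x -> ideal_pow J k x.
Proof.
apply: ideal_gen_min; first exact: ideal_pow_ideal.
by move=> _ [a [b [Ja [_ ->]]]]; apply: idealMr => //; apply: ideal_pow_ideal.
Qed.

Lemma prod_compD (B C : nat -> R -> Prop) J k x y :
  prod_comp B C J k x -> prod_comp B C J k y -> prod_comp B C J k (x + y).
Proof.
move=> [Jx [s1 [H1 D1]]] [Jy [s2 [H2 D2]]].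
split; first by apply: idealD => //; apply: ideal_pow_ideal.
exists (s1 ++ s2); split; first by move=> t; rewrite mem_cat => /orP [/H1|/H2].
by rewrite big_cat opprD addrACA; apply: idealD => //; apply: ideal_pow_ideal.
Qed.

Lemma prod_comp_pow_succ (B C : nat -> R -> Prop) J k x :
  ideal_pow J k.+1 x -> prod_comp B C J k x.
Proof.
by move=> Jx; split; [apply: ideal_powS_sub | exists [::]; rewrite big_nil subr0].
Qed.

End Ideals.

Section RingMorphism.
Variables (R1 R : comNzRingType) (f : {rmorphism R1 -> R}).
Variables (J1 nn1 : R1 -> Prop) (J : R -> Prop).
Hypothesis fJ : forall a, J1 a -> J (f a).

Lemma ideal_gen_rmorph G p : ideal_gen G p ->
  ideal_gen (fun q => exists2 a, G a & q = f a) (f p).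
Proof.
move=> [s [Hs ->]]; exists [seq (f t.1, f t.2) | t <- s]; split.
  by move=> _ /mapP [t Ht ->]; exists t.2 => //; apply: Hs.
by rewrite big_map rmorph_sum; apply: eq_bigr => t _; rewrite rmorphM.
Qed.

Lemma ideal_pow_rmorph i a : ideal_pow J1 i a -> ideal_pow J i (f a).
Proof.
elim: i a => [|i IH] a Ha; first exact: ideal_pow0.
move: (ideal_gen_rmorph Ha); apply: ideal_gen_min; first exact: ideal_pow_ideal.
move=> _ [_ [a0 [b0 [Ha0 [Hb0 ->]]]] ->]; apply: ideal_gen_mem.
by exists (f a0), (f b0); rewrite rmorphM; split; [apply: IH | split; [apply: fJ |]].
Qed.

Lemma ext_comp_soc_lift i a c : soc_lift J1 nn1 i a ->
  ext_comp f (soc_lift J1 nn1) J i (c * f a).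
Proof.
move=> [Ja Hcol]; split.
  by apply: idealMl; [apply: ideal_pow_ideal | apply: ideal_pow_rmorph].
exists [:: (i, c, a)]; rewrite big_seq1 subrr; split.
  move=> t; rewrite inE => /eqP -> /=; rewrite subnn.
  by split=> //; split; [apply: ideal_pow0 | split].
by apply: ideal0; apply: ideal_pow_ideal.
Qed.

Lemma ext_comp_soc_mul d x z : nn1 z ->
  ext_comp f (soc_lift J1 nn1) J d x -> ideal_pow J d.+1 (x * f z).
Proof.
move=> nn1z [_ [s [Hs Hd]]].
rewrite -[x](subrK (\sum_(t <- s) t.1.2 * f t.2)) mulrDl mulr_suml.
apply: idealD; first exact: ideal_pow_ideal.
  by apply: idealMr => //; apply: ideal_pow_ideal.
apply: ideal_sum; first exact: ideal_pow_ideal.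
move=> t /Hs [le_td [Jr [_ colon_t]]].
rewrite -mulrA -rmorphM -(subnK le_td) -addnS.
by apply: ideal_powD => //; apply: ideal_pow_rmorph; apply: colon_t.
Qed.

End RingMorphism.

Section SocleProduct.
Variables (R1 R2 R : comNzRingType).
Variables (f1 : {rmorphism R1 -> R}) (f2 : {rmorphism R2 -> R}).
Variables (J1 nn1 : R1 -> Prop) (J2 nn2 : R2 -> Prop) (J : R -> Prop).
Hypotheses (f1J : forall a, J1 a -> J (f1 a)) (f2J : forall b, J2 b -> J (f2 b)).
Local Notation soc1 := (ext_comp f1 (soc_lift J1 nn1) J).
Local Notation soc2 := (ext_comp f2 (soc_lift J2 nn2) J).

Lemma prod_comp_soc_lift i j a b c : soc_lift J1 nn1 i a -> soc_lift J2 nn2 j b ->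
  prod_comp soc1 soc2 J (i + j) (c * f1 a * f2 b).
Proof.
move=> Ha Hb; have Ha' := ext_comp_soc_lift f1J c Ha.
have Hb' := ext_comp_soc_lift f2J 1 Hb; rewrite mul1r in Hb'.
split; first by apply: ideal_powD; [case: Ha' | case: Hb'].
exists [:: (i, c * f1 a, f2 b)]; rewrite big_seq1 subrr.
split; last by apply: ideal0; apply: ideal_pow_ideal.
by move=> t; rewrite inE => /eqP -> /=; rewrite leq_addr addKn.
Qed.

Lemma prod_comp_soc_mul k u z : prod_comp soc1 soc2 J k u ->
  (exists2 z1, nn1 z1 & z = f1 z1) \/ (exists2 z2, nn2 z2 & z = f2 z2) ->
  ideal_pow J k.+1 (u * z).
Proof.
move=> [_ [s [Hs Hd]]] Hz.
rewrite -[u](subrK (\sum_(t <- s) t.1.2 * t.2)) mulrDl mulr_suml.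
apply: idealD; first exact: ideal_pow_ideal.
  by apply: idealMr => //; apply: ideal_pow_ideal.
apply: ideal_sum; first exact: ideal_pow_ideal.
move=> t /Hs [le_tk [Hx Hy]]; case: Hz => [[z1 nn1z1 ->] | [z2 nn2z2 ->]].
- rewrite mulrAC -(subnKC le_tk) -addSn.
  by apply: ideal_powD; [apply: ext_comp_soc_mul Hx | case: Hy].
- rewrite -mulrA -(subnKC le_tk) -addnS.
  by apply: ideal_powD; [case: Hx | apply: ext_comp_soc_mul Hy].
Qed.

End SocleProduct.

Section MonomialIdeals.
Variables (K : fieldType) (N : nat).
Implicit Types (G H : 'X_{1..N} -> Prop) (p : {mpoly K[N]}) (w : 'X_{1..N}).

Definition msupp_in (P : 'X_{1..N} -> Prop) p := forall w, w \in msupp p -> P w.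

Definition above G w := exists2 g, G g & (g <= w)%MM.

Definition msumset G H w := exists g h, [/\ G g, H h & w = (g + h)%MM].

Fixpoint mpowset G k : 'X_{1..N} -> Prop :=
  if k is k.+1 then msumset (mpowset G k) G else eq 0%MM.

Definition is_monomial_ideal_of G (J : {mpoly K[N]} -> Prop) :=
  forall p, J p <-> msupp_in (above G) p.

Lemma lepmD (a b c d : 'X_{1..N}) :
  (a <= b)%MM -> (c <= d)%MM -> (a + c <= b + d)%MM.
Proof.
by move=> /mnm_lepP le_ab /mnm_lepP le_cd; apply/mnm_lepP => i; rewrite !mnmDE leq_add.
Qed.

Lemma above_le G w w' : above G w -> (w <= w')%MM -> above G w'.
Proof. by move=> [g Gg le_gw] le_ww'; exists g => //; apply: lepm_trans le_ww'. Qed.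

Lemma above_refl G w : G w -> above G w.
Proof. by exists w => //; apply: lepm_refl. Qed.

Lemma msupp_in_above_ideal G : is_ideal (msupp_in (above G)).
Proof.
split; first by move=> w; rewrite msupp0.
- move=> p q Hp Hq w /msuppD_le; rewrite mem_cat => /orP [/Hp|/Hq] //.
- move=> r p Hp w /msuppM_le /allpairsP [[w1 w2] /= [_ /Hp Hw2 ->]].
  by apply: above_le Hw2 _; apply: lem_addl.
Qed.

Lemma msupp_inX (P : 'X_{1..N} -> Prop) w : msupp_in P 'X_[w] <-> P w.
Proof.
split; first by apply; rewrite msuppX inE.
by move=> Pw w'; rewrite msuppX inE => /eqP ->.
Qed.

Lemma monomial_idealP (J : {mpoly K[N]} -> Prop) :
  monomial_ideal J -> exists G, is_monomial_ideal_of G J.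
Proof.
move=> [G HG]; exists G => p; rewrite HG; split.
  apply: ideal_gen_min; first exact: msupp_in_above_ideal.
  by move=> _ [g [Gg ->]]; apply/msupp_inX/above_refl.
move=> Hp; rewrite (mpolyE p); apply: ideal_sum; first exact: ideal_gen_ideal.
move=> w /Hp [g Gg le_gw]; rewrite -(submK le_gw) mpolyXD scalerAl.
by apply: idealMl; [apply: ideal_gen_ideal | apply: ideal_gen_mem; exists g].
Qed.

Lemma monomial_ideal_mul (A B : {mpoly K[N]} -> Prop) G H :
  is_monomial_ideal_of G A -> is_monomial_ideal_of H B ->
  is_monomial_ideal_of (msumset G H) (ideal_mul A B).
Proof.
move=> HA HB p; split.
  move: p; apply: ideal_gen_min; first exact: msupp_in_above_ideal.
  move=> _ [a [b [/HA Ha [/HB Hb ->]]]] w /msuppM_le /allpairsP.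
  move=> [[w1 w2] /= [/Ha [g Gg le_g] /Hb [h Hh le_h] ->]].
  by exists (g + h)%MM; [exists g, h | apply: lepmD].
move=> Hp; rewrite (mpolyE p); apply: ideal_sum; first exact: ideal_gen_ideal.
move=> w /Hp [_ [g [h [Gg Hh ->]]] le_w].
rewrite -(submK le_w) mpolyXD scalerAl.
apply: idealMl; first exact: ideal_gen_ideal.
apply: ideal_gen_mem; exists 'X_[g], 'X_[h]; rewrite mpolyXD.
by split; [apply/HA/msupp_inX/above_refl | split; [apply/HB/msupp_inX/above_refl |]].
Qed.

Lemma monomial_ideal_pow (J : {mpoly K[N]} -> Prop) G k :
  is_monomial_ideal_of G J -> is_monomial_ideal_of (mpowset G k) (ideal_pow J k).
Proof.
move=> HJ; elim: k => [|k IH] p /=; last exact: monomial_ideal_mul.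
split=> _; last exact: ideal_pow0.
by move=> w _; exists 0%MM => //; apply/mnm_lepP => i; rewrite mnm0E.
Qed.

Lemma above_mpowset_le G a b w :
  (a <= b)%N -> above (mpowset G b) w -> above (mpowset G a) w.
Proof.
move=> /subnK <-; elim: (b - a)%N => [|d IH] //= [_ [g [h [Gg _ ->]]] le_w].
by apply: IH; exists g => //; apply: lepm_trans le_w; apply: lem_addr.
Qed.

Definition msocle G k w :=
  above (mpowset G k) w /\ forall v : 'I_N, above (mpowset G k.+1) (U_(v) + w)%MM.

Lemma soc_lift_msupp (J : {mpoly K[N]} -> Prop) G k u :
  is_monomial_ideal_of G J -> soc_lift J (@maxgr K N) k u ->
  forall w, w \in msupp u -> msocle G k w.
Proof.
move=> HJ [Ju Hcol] w Hw; split; first exact: (monomial_ideal_pow k HJ u).1.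
move=> v; have /(monomial_ideal_pow k.+1 HJ) := Hcol _ (ideal_gen_mem (ex_intro _ v erefl)).
by apply; rewrite (perm_mem (msuppMX u U_(v))) map_f.
Qed.

Lemma soc_liftX (J : {mpoly K[N]} -> Prop) G k w :
  is_monomial_ideal_of G J -> msocle G k w -> soc_lift J (@maxgr K N) k 'X_[w].
Proof.
move=> HJ [Hw Hv]; split; first exact/(monomial_ideal_pow k HJ _).2/msupp_inX.
apply: colon_ideal_gen; first exact: ideal_pow_ideal.
move=> _ [v ->]; rewrite -mpolyXD addmC.
exact/(monomial_ideal_pow k.+1 HJ _).2/msupp_inX.
Qed.

End MonomialIdeals.

Section BlockMonomials.
Variables (K : fieldType) (m n : nat).
Implicit Types (a : 'X_{1..m}) (b : 'X_{1..n}) (w : 'X_{1..m + n}).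

Definition mlift_l a : 'X_{1..m + n} :=
  [multinom if split i is inl j then a j else 0%N | i < m + n].
Definition mlift_r b : 'X_{1..m + n} :=
  [multinom if split i is inr j then b j else 0%N | i < m + n].
Definition mproj_l w : 'X_{1..m} := [multinom w (lshift n i) | i < m].
Definition mproj_r w : 'X_{1..n} := [multinom w (rshift m i) | i < n].

Lemma mlift_l_lshift a j : mlift_l a (lshift n j) = a j.
Proof. by rewrite mnmE (unsplitK (inl _ j)). Qed.
Lemma mlift_l_rshift a j : mlift_l a (rshift m j) = 0%N.
Proof. by rewrite mnmE (unsplitK (inr _ j)). Qed.
Lemma mlift_r_lshift b j : mlift_r b (lshift n j) = 0%N.
Proof. by rewrite mnmE (unsplitK (inl _ j)). Qed.
Lemma mlift_r_rshift b j : mlift_r b (rshift m j) = b j.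
Proof. by rewrite mnmE (unsplitK (inr _ j)). Qed.
Lemma mproj_lE w j : mproj_l w j = w (lshift n j).
Proof. by rewrite mnmE. Qed.
Lemma mproj_rE w j : mproj_r w j = w (rshift m j).
Proof. by rewrite mnmE. Qed.

Definition mlift_shiftE :=
  (mlift_l_lshift, mlift_l_rshift, mlift_r_lshift, mlift_r_rshift, mproj_lE, mproj_rE).

Lemma mproj_liftK w : (mlift_l (mproj_l w) + mlift_r (mproj_r w))%MM = w.
Proof.
by apply/mnmP => i; rewrite mnmDE; case: (split_ordP i) => j ->; rewrite !mlift_shiftE ?addn0.
Qed.

Lemma mproj_l_lift a b : mproj_l (mlift_l a + mlift_r b)%MM = a.
Proof. by apply/mnmP => j; rewrite mproj_lE mnmDE !mlift_shiftE addn0. Qed.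
Lemma mproj_r_lift a b : mproj_r (mlift_l a + mlift_r b)%MM = b.
Proof. by apply/mnmP => j; rewrite mproj_rE mnmDE !mlift_shiftE. Qed.

Lemma mproj_l_le w w' : (w <= w')%MM -> (mproj_l w <= mproj_l w')%MM.
Proof. by move=> /mnm_lepP le_w; apply/mnm_lepP => j; rewrite !mproj_lE. Qed.
Lemma mproj_r_le w w' : (w <= w')%MM -> (mproj_r w <= mproj_r w')%MM.
Proof. by move=> /mnm_lepP le_w; apply/mnm_lepP => j; rewrite !mproj_rE. Qed.

Lemma mlift_le a b a' b' : (a <= a')%MM -> (b <= b')%MM ->
  (mlift_l a + mlift_r b <= mlift_l a' + mlift_r b')%MM.
Proof.
move=> /mnm_lepP le_a /mnm_lepP le_b; apply/mnm_lepP => i; rewrite !mnmDE.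
by case: (split_ordP i) => j ->; rewrite !mlift_shiftE ?addn0 ?add0n.
Qed.

Lemma mlift_lD a a' : mlift_l (a + a')%MM = (mlift_l a + mlift_l a')%MM.
Proof.
by apply/mnmP => i; rewrite mnmDE; case: (split_ordP i) => j ->; rewrite !mlift_shiftE ?mnmDE.
Qed.
Lemma mlift_rD b b' : mlift_r (b + b')%MM = (mlift_r b + mlift_r b')%MM.
Proof.
by apply/mnmP => i; rewrite mnmDE; case: (split_ordP i) => j ->; rewrite !mlift_shiftE ?mnmDE.
Qed.
Lemma mlift_l0 : mlift_l 0%MM = 0%MM.
Proof.
by apply/mnmP => i; rewrite mnm0E; case: (split_ordP i) => j ->; rewrite !mlift_shiftE ?mnm0E.
Qed.
Lemma mlift_r0 : mlift_r 0%MM = 0%MM.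
Proof.
by apply/mnmP => i; rewrite mnm0E; case: (split_ordP i) => j ->; rewrite !mlift_shiftE ?mnm0E.
Qed.

Lemma mproj_U_lshift v w :
  mproj_l (U_(lshift n v) + w)%MM = (U_(v) + mproj_l w)%MM /\
  mproj_r (U_(lshift n v) + w)%MM = mproj_r w.
Proof.
split; apply/mnmP => j; rewrite ?mproj_lE ?mproj_rE !mnmDE ?mproj_lE ?mproj_rE !mnm1E.
  by rewrite eq_lshift.
by rewrite eq_lrshift.
Qed.
Lemma mproj_U_rshift v w :
  mproj_l (U_(rshift m v) + w)%MM = mproj_l w /\
  mproj_r (U_(rshift m v) + w)%MM = (U_(v) + mproj_r w)%MM.
Proof.
split; apply/mnmP => j; rewrite ?mproj_lE ?mproj_rE !mnmDE ?mproj_lE ?mproj_rE !mnm1E.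
  by rewrite eq_rlshift.
by rewrite eq_rshift.
Qed.

Definition blockset (G1 : 'X_{1..m} -> Prop) (G2 : 'X_{1..n} -> Prop) w :=
  (exists2 a, G1 a & w = mlift_l a) \/ (exists2 b, G2 b & w = mlift_r b).

Lemma mpowset_block_r G1 G2 j b :
  mpowset G2 j b -> mpowset (blockset G1 G2) j (mlift_r b).
Proof.
elim: j b => [|j IH] b' /=; first by move<-; rewrite mlift_r0.
move=> [b [h [Hb Hh ->]]]; exists (mlift_r b), (mlift_r h).
by rewrite mlift_rD; split; [apply: IH | right; exists h |].
Qed.

Lemma mpowset_block G1 G2 k w :
  mpowset (blockset G1 G2) k w <->
  exists i j a b, [/\ (i + j)%N = k, mpowset G1 i a, mpowset G2 j b
                    & w = (mlift_l a + mlift_r b)%MM].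
Proof.
split.
  elim: k w => [|k IH] w /=.
    by move<-; exists 0%N, 0%N, 0%MM, 0%MM; rewrite mlift_l0 mlift_r0 addm0.
  move=> [_ [h [/IH [i [j [a [b [<- Ha Hb ->]]]]] Hh ->]]].
  case: Hh => [[h1 Hh1 ->] | [h2 Hh2 ->]].
  - exists i.+1, j, (a + h1)%MM, b; split=> //; first by exists a, h1.
    by rewrite mlift_lD Monoid.mulmAC.
  - exists i, j.+1, a, (b + h2)%MM; rewrite addnS; split=> //; first by exists b, h2.
    by rewrite mlift_rD addmA.
move=> [i [j [a [b [<- Ha Hb ->]]]]]; elim: i a Ha => [|i IH] a' /=.
  by move<-; rewrite mlift_l0 add0m; apply: mpowset_block_r.
move=> [a [h [Ha Hh ->]]]; exists (mlift_l a + mlift_r b)%MM, (mlift_l h).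
by rewrite mlift_lD Monoid.mulmAC; split; [apply: IH | left; exists h |].
Qed.

Lemma above_mpowset_block G1 G2 k w :
  above (mpowset (blockset G1 G2) k) w <->
  exists i j, [/\ (i + j)%N = k, above (mpowset G1 i) (mproj_l w)
                & above (mpowset G2 j) (mproj_r w)].
Proof.
split.
  move=> [_ /mpowset_block [i [j [a [b [Hk Ha Hb ->]]]]] le_w].
  exists i, j; split=> //.
    by exists a => //; rewrite -(mproj_l_lift a b); apply: mproj_l_le.
  by exists b => //; rewrite -(mproj_r_lift a b); apply: mproj_r_le.
move=> [i [j [Hk [a Ha le_a] [b Hb le_b]]]].
exists (mlift_l a + mlift_r b)%MM; first by apply/mpowset_block; exists i, j, a, b.
by rewrite -[w]mproj_liftK; apply: mlift_le.
Qed.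

Lemma incl1X a : incl1 n ('X_[a] : {mpoly K[m]}) = 'X_[mlift_l a].
Proof.
rewrite /incl1 mmapX /mmap1 [RHS]mpolyXE_id big_split_ord /=.
rewrite [X in _ = _ * X]big1 ?mulr1 => [|i _]; last by rewrite mlift_l_rshift expr0.
by apply: eq_bigr => i _; rewrite mlift_l_lshift.
Qed.

Lemma incl2X b : incl2 m ('X_[b] : {mpoly K[n]}) = 'X_[mlift_r b].
Proof.
rewrite /incl2 mmapX /mmap1 [RHS]mpolyXE_id big_split_ord /=.
rewrite [X in _ = X * _]big1 ?mul1r => [|i _]; last by rewrite mlift_r_lshift expr0.
by apply: eq_bigr => i _; rewrite mlift_r_rshift.
Qed.

Lemma incl1U v : incl1 n ('X_v : {mpoly K[m]}) = 'X_(lshift n v).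
Proof. by rewrite /incl1 mmapX mmap1U. Qed.
Lemma incl2U v : incl2 m ('X_v : {mpoly K[n]}) = 'X_(rshift m v).
Proof. by rewrite /incl2 mmapX mmap1U. Qed.

Lemma above_mlift_l G1 G2 a : above G1 a -> above (blockset G1 G2) (mlift_l a).
Proof.
move=> [g Gg le_ga]; exists (mlift_l g); first by left; exists g.
by rewrite -[mlift_l g]addm0 -[mlift_l a]addm0 -mlift_r0; apply: mlift_le (lepm_refl _).
Qed.
Lemma above_mlift_r G1 G2 b : above G2 b -> above (blockset G1 G2) (mlift_r b).
Proof.
move=> [g Gg le_gb]; exists (mlift_r g); first by right; exists g.
by rewrite -[mlift_r g]add0m -[mlift_r b]add0m -mlift_l0; apply: mlift_le (lepm_refl _) _.
Qed.

Lemma sum_ideal_monomial I1 I2 G1 G2 :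
  is_monomial_ideal_of G1 I1 -> is_monomial_ideal_of G2 I2 ->
  is_monomial_ideal_of (blockset G1 G2) (@sum_ideal K m n I1 I2).
Proof.
move=> HI1 HI2 p; split.
  move: p; apply: ideal_gen_min; first exact: msupp_in_above_ideal.
  move=> _ [[a [/HI1 Ha ->]] | [b [/HI2 Hb ->]]].
  - rewrite (mpolyE a) /incl1 raddf_sum.
    apply: ideal_sum; first exact: msupp_in_above_ideal.
    move=> w /Ha Hw; rewrite /= mmapZ -/(incl1 n _) incl1X.
    by apply: (idealMl (@msupp_in_above_ideal K _ _)); apply/msupp_inX/above_mlift_l.
  - rewrite (mpolyE b) /incl2 raddf_sum.
    apply: ideal_sum; first exact: msupp_in_above_ideal.
    move=> w /Hb Hw; rewrite /= mmapZ -/(incl2 m _) incl2X.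
    by apply: (idealMl (@msupp_in_above_ideal K _ _)); apply/msupp_inX/above_mlift_r.
move=> Hp; rewrite (mpolyE p); apply: ideal_sum; first exact: ideal_gen_ideal.
move=> w /Hp [g Hg le_gw]; rewrite -(submK le_gw) mpolyXD scalerAl.
apply: idealMl; first exact: ideal_gen_ideal.
apply: ideal_gen_mem; case: Hg => [[a Ga ->] | [b Gb ->]].
- by left; exists 'X_[a]; rewrite incl1X; split=> //; apply/HI1/msupp_inX/above_refl.
- by right; exists 'X_[b]; rewrite incl2X; split=> //; apply/HI2/msupp_inX/above_refl.
Qed.

Lemma msocle_block G1 G2 k w :
  msocle (blockset G1 G2) k w -> ~ above (mpowset (blockset G1 G2) k.+1) w ->
  exists i j,
    [/\ (i + j)%N = k, msocle G1 i (mproj_l w) & msocle G2 j (mproj_r w)].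
Proof.
move=> [/above_mpowset_block [i [j [Hij H1 H2]]] Hv] Hk1.
have top_r j' : above (mpowset G2 j') (mproj_r w) -> (j' <= j)%N.
  move=> H2'; rewrite leqNgt; apply/negP => lt_jj'; apply: Hk1.
  apply/above_mpowset_block; exists i, j.+1; split=> //; first by rewrite addnS Hij.
  exact: above_mpowset_le H2'.
have top_l i' : above (mpowset G1 i') (mproj_l w) -> (i' <= i)%N.
  move=> H1'; rewrite leqNgt; apply/negP => lt_ii'; apply: Hk1.
  apply/above_mpowset_block; exists i.+1, j; split=> //; first by rewrite addSn Hij.
  exact: above_mpowset_le H1'.
exists i, j; split=> //; split=> // v.
- have /above_mpowset_block [i' [j' [Hij' H1' H2']]] := Hv (lshift n v).
  move: H1' H2'; case: (mproj_U_lshift v w) => -> -> H1' /top_r le_j.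
  by apply: above_mpowset_le H1'; lia.
- have /above_mpowset_block [i' [j' [Hij' H1' H2']]] := Hv (rshift m v).
  move: H1' H2'; case: (mproj_U_rshift v w) => -> -> /top_l le_i H2'.
  by apply: above_mpowset_le H2'; lia.
Qed.

End BlockMonomials.

Section SocleOfSumIdeal.
Variables (K : fieldType) (m n : nat).
Variables (I1 : {mpoly K[m]} -> Prop) (I2 : {mpoly K[n]} -> Prop).
Local Notation I := (sum_ideal I1 I2).
Local Notation soc1 := (ext_comp (@incl1 K m n) (soc_lift I1 (@maxgr K m)) I).
Local Notation soc2 := (ext_comp (@incl2 K m n) (soc_lift I2 (@maxgr K n)) I).

Lemma incl1_sum_ideal a : I1 a -> I (incl1 n a).
Proof. by move=> I1a; apply: ideal_gen_mem; left; exists a. Qed.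
Lemma incl2_sum_ideal b : I2 b -> I (incl2 m b).
Proof. by move=> I2b; apply: ideal_gen_mem; right; exists b. Qed.

Lemma prod_comp_soc_sum_ideal k u :
  ideal_pow I k u -> prod_comp soc1 soc2 I k u -> soc_lift I (@maxgr K (m + n)) k u.
Proof.
move=> Iku Hu; split=> //; apply: colon_ideal_gen; first exact: ideal_pow_ideal.
move=> _ [v ->]; apply: (prod_comp_soc_mul incl1_sum_ideal incl2_sum_ideal Hu).
case: (split_ordP v) => v' ->; [left | right]; exists 'X_v';
  by [apply: ideal_gen_mem; exists v' | exact/esym/incl1U | exact/esym/incl2U].
Qed.

Lemma soc_sum_ideal_prod_comp G1 G2 k u :
  is_monomial_ideal_of G1 I1 -> is_monomial_ideal_of G2 I2 ->
  soc_lift I (@maxgr K (m + n)) k u -> prod_comp soc1 soc2 I k u.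
Proof.
move=> HI1 HI2 Hu; have HI := sum_ideal_monomial HI1 HI2.
rewrite (mpolyE u) big_seq; apply: big_ind; last 1 first.
- move=> w /(soc_lift_msupp HI Hu) Hw; rewrite -mul_mpolyC.
  have [Hk1 | /(msocle_block Hw) [i [j [<- H1 H2]]]] :=
    classic (above (mpowset (blockset G1 G2) k.+1) w).
    apply: prod_comp_pow_succ; apply: idealMl; first exact: ideal_pow_ideal.
    exact/(monomial_ideal_pow k.+1 HI)/msupp_inX.
  rewrite -[w]mproj_liftK mpolyXD -incl1X -incl2X mulrA.
  exact: (prod_comp_soc_lift incl1_sum_ideal incl2_sum_ideal _
            (soc_liftX HI1 H1) (soc_liftX HI2 H2)).
- by apply: prod_comp_pow_succ; apply: ideal0; apply: ideal_pow_ideal.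
- exact: prod_compD.
Qed.

End SocleOfSumIdeal.

Theorem theorem1p2 (K : fieldType) (m n : nat)
    (I1 : {mpoly K[m]} -> Prop) (I2 : {mpoly K[n]} -> Prop) :
  monomial_ideal I1 -> monomial_ideal I2 ->
  ratliff I1 -> ratliff I2 -> ratliff (sum_ideal I1 I2) ->
  forall (k : nat) (u : {mpoly K[m + n]}),
    ideal_pow (sum_ideal I1 I2) k u ->
    (soc_lift (sum_ideal I1 I2) (@maxgr K (m + n)) k u <->
     prod_comp
       (ext_comp (@incl1 K m n) (soc_lift I1 (@maxgr K m)) (sum_ideal I1 I2))
       (ext_comp (@incl2 K m n) (soc_lift I2 (@maxgr K n)) (sum_ideal I1 I2))
       (sum_ideal I1 I2) k u).
Proof.
move=> /monomial_idealP [G1 HI1] /monomial_idealP [G2 HI2] _ _ _ k u Iku.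
split; first exact: soc_sum_ideal_prod_comp HI1 HI2.
exact: prod_comp_soc_sum_ideal.
Qed.
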